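(* Let $n\geq 4$ and let $\gamma: WT_n\to\mathrm{GL}_{n+1}(\mathbb{C})$ be a homogeneous $3$-local representation of the welded twin group $WT_n$. Then $\gamma$ is unfaithful.
   Context: The virtual twin group $VT_n$ has generators $s_1,\dots,s_{n-1},\rho_1,\dots,\rho_{n-1}$ and defining relations: $s_i^2=1$ ($1\le i\le n-1$); $s_is_j=s_js_i$ ($|i-j|\ge2$); $\rho_i\rho_{i+1}\rho_i=\rho_{i+1}\rho_i\rho_{i+1}$ ($1\le i\le n-2$); $\rho_i\rho_j=\rho_j\rho_i$ ($|i-j|\ge2$); $\rho_i^2=1$; $s_i\rho_j=\rho_js_i$ ($|i-j|\ge2$); $\rho_i\rho_{i+1}s_i=s_{i+1}\rho_i\rho_{i+1}$ ($1\le i\le n-2$). The welded twin group $WT_n$ is the quotient of $VT_n$ by the additional relations $\rho_is_{i+1}s_i=s_{i+1}s_i\rho_{i+1}$ ($1\le i\le n-2$). A representation $\gamma:WT_n\to\mathrm{GL}_{n+1}(\mathbb{C})$ is homogeneous $3$-local if there are fixed $M,N\in\mathrm{GL}_3(\mathbb{C})$ with $\gamma(s_i)=\mathrm{diag}(I_{i-1},M,I_{n-i-1})$ and $\gamma(\rho_i)=\mathrm{diag}(I_{i-1},N,I_{n-i-1})$ for all $i$ (block-diagonal, $I_r$ the $r\times r$ identity). Unfaithful means not injective. *)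

From HB Require Import structures.
From mathcomp Require Import all_boot all_order all_algebra.
From mathcomp Require Import complex.
From mathcomp Require Import Rstruct.
Set Implicit Arguments. Unset Strict Implicit. Unset Printing Implicit Defensive.
Import Order.TTheory GRing.Theory Num.Theory.
Local Open Scope ring_scope.

Definition CC : Type := complex Rdefinitions.R.

(* Generators of VT_n / WT_n.  [S i] stands for s_(i+1) and [Rho i] for
   rho_(i+1) (0-indexed); a generator is valid in WT_n iff i < n-1. *)
Inductive wgen : Type := S of nat | Rho of nat.

Definition wgen_valid (n : nat) (g : wgen) : bool :=
  match g with S i => (i < n.-1)%N | Rho i => (i < n.-1)%N end.

Inductive wt_rel (n : nat) : seq wgen -> seq wgen -> Prop :=
| rel_ss i : (i < n.-1)%N -> wt_rel n [:: S i; S i] [::]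
| rel_s_comm i j : (i < n.-1)%N -> (j < n.-1)%N -> (i.+2 <= j)%N ->
    wt_rel n [:: S i; S j] [:: S j; S i]
| rel_rho_braid i : (i.+1 < n.-1)%N ->
    wt_rel n [:: Rho i; Rho i.+1; Rho i] [:: Rho i.+1; Rho i; Rho i.+1]
| rel_rho_comm i j : (i < n.-1)%N -> (j < n.-1)%N -> (i.+2 <= j)%N ->
    wt_rel n [:: Rho i; Rho j] [:: Rho j; Rho i]
| rel_rr i : (i < n.-1)%N -> wt_rel n [:: Rho i; Rho i] [::]
| rel_mixed_comm i j : (i < n.-1)%N -> (j < n.-1)%N ->
    ((i.+2 <= j) || (j.+2 <= i))%N ->
    wt_rel n [:: S i; Rho j] [:: Rho j; S i]
| rel_mixed i : (i.+1 < n.-1)%N ->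
    wt_rel n [:: Rho i; Rho i.+1; S i] [:: S i.+1; Rho i; Rho i.+1]
| rel_welded i : (i.+1 < n.-1)%N ->
    wt_rel n [:: Rho i; S i.+1; S i] [:: S i.+1; S i; Rho i.+1].

(* Since all generators are
   involutions, every element of WT_n is represented by such a word. *)
Inductive wt_eq (n : nat) : seq wgen -> seq wgen -> Prop :=
| wt_eq_refl w : wt_eq n w w
| wt_eq_sym w1 w2 : wt_eq n w1 w2 -> wt_eq n w2 w1
| wt_eq_trans w1 w2 w3 : wt_eq n w1 w2 -> wt_eq n w2 w3 -> wt_eq n w1 w3
| wt_eq_rel u v l r : all (wgen_valid n) u -> all (wgen_valid n) v ->
    wt_rel n l r -> wt_eq n (u ++ l ++ v) (u ++ r ++ v).

(* diag(I_j, A, I_(n-j-2)) in M_(n+1), i.e. A placed in rows/columns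
   j, j+1, j+2 (0-indexed); for generator index j (= i-1). *)
Definition local_mx (n j : nat) (A : 'M[CC]_3) : 'M[CC]_(n.+1) :=
  \matrix_(a < n.+1, b < n.+1)
    if [&& (j <= a)%N, (a < j + 3)%N, (j <= b)%N & (b < j + 3)%N]
    then A (inord (a - j)) (inord (b - j))
    else (a == b)%:R.

Definition gen_mx (n : nat) (M N : 'M[CC]_3) (g : wgen) : 'M[CC]_(n.+1) :=
  match g with S i => local_mx n i M | Rho i => local_mx n i N end.

Definition word_mx (n : nat) (M N : 'M[CC]_3) (w : seq wgen) : 'M[CC]_(n.+1) :=
  foldr (fun g acc => gen_mx n M N g *m acc) 1%:M w.

(* Write M and N for the 3 x 3 blocks of the images of the s_i and the rho_i.
   Reading the defining relations of WT_4 entry by entry (far commutation,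
   s_1^2 = rho_1^2 = 1, the mixed and welded relations and the braid relation
   of the rho_i) gives polynomial equations in the 18 entries of M and N, whose
   solutions are of three kinds only: N = M, or M and N are both scaled
   transpositions of the first two coordinates, or both of the last two.  If
   N = M, then s_1 rho_1 acts trivially; otherwise (s_1 rho_2)^3 does.  Neither
   word is trivial in WT_n, because every relation preserves the parity of the
   number of letters s_i. *)

From HB Require Import structures.
From mathcomp Require Import all_boot all_order all_algebra.
From mathcomp Require Import complex Rstruct.
From mathcomp Require Import ring zify.
Import Order.TTheory GRing.Theory Num.Theory.
Local Open Scope ring_scope.

Set Implicit Arguments.
Unset Strict Implicit.
Unset Printing Implicit Defensive.

Lemma eq0_of_eq_sub (V : zmodType) (x y z : V) : x = y -> z = x - y -> z = 0.
Proof. by move=> -> ->; rewrite subrr. Qed.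

Lemma eq0_of_sqr (R : idomainType) (x : R) : x * x = 0 -> x = 0.
Proof. by move/eqP; rewrite -expr2 sqrf_eq0 => /eqP. Qed.

Lemma neq0_mul_eq1 (R : idomainType) (x y : R) : x * y = 1 -> x != 0.
Proof. by apply: contra_eqN => /eqP->; rewrite mul0r eq_sym oner_eq0. Qed.

Lemma two_neq0 (R : numDomainType) : (2 : R) != 0.
Proof. by rewrite pnatr_eq0. Qed.

Lemma big_nat_window (V : nmodType) n j w (F : nat -> V) :
  (j + w <= n)%N -> (forall r, (r < n)%N -> ~~ (j <= r < j + w)%N -> F r = 0) ->
  \sum_(0 <= r < n) F r = \sum_(j <= r < j + w) F r.
Proof.
move=> jwn F0.
rewrite (@big_cat_nat _ _ _ j) ?leq0n //=; last lia.
rewrite (@big_cat_nat _ _ _ (j + w) j) ?leq_addr //=.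
have -> : \sum_(0 <= r < j) F r = 0.
  by rewrite big_nat_cond big1 // => r /andP[/andP[_ rj] _]; apply: F0; lia.
have -> : \sum_(j + w <= r < n) F r = 0.
  by rewrite big_nat_cond big1 // => r /andP[/andP[jwr rn] _]; apply: F0; lia.
by rewrite add0r addr0.
Qed.

Lemma inord_eq n p q : (p <= n)%N -> (q <= n)%N -> (@inord n p == inord q) = (p == q).
Proof. by move=> pn qn; rewrite -val_eqE /= !inordK. Qed.

Lemma eq_mx_inord (R : Type) n (X Y : 'M[R]_n.+1) :
  (forall p q, (p <= n)%N -> (q <= n)%N -> X (inord p) (inord q) = Y (inord p) (inord q)) ->
  X = Y.
Proof.
move=> XY; apply/matrixP => i j; rewrite -(inord_val i) -(inord_val j).
by apply: XY; rewrite -ltnS.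
Qed.

Section LocalMatrix.
Variables (n j : nat) (A : 'M[CC]_3).

Lemma local_mxE p q : (p <= n)%N -> (q <= n)%N ->
  local_mx n j A (inord p) (inord q) =
  if [&& j <= p, p < j + 3, j <= q & q < j + 3]%N
  then A (inord (p - j)) (inord (q - j)) else (p == q)%:R.
Proof. by move=> pn qn; rewrite mxE !inordK // inord_eq. Qed.

Lemma mul_local_mxE (X : 'M[CC]_n.+1) p q : (j + 2 <= n)%N -> (p <= n)%N ->
  (local_mx n j A *m X) (inord p) q =
  if (j <= p < j + 3)%N then
    A (inord (p - j)) (inord 0%N) * X (inord j) q
  + A (inord (p - j)) (inord 1%N) * X (inord j.+1) q
  + A (inord (p - j)) (inord 2%N) * X (inord j.+2) q
  else X (inord p) q.
Proof.
move=> jn pn; rewrite mxE.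
pose F r := local_mx n j A (inord p) (inord r) * X (inord r) q.
rewrite (eq_bigr (fun r : 'I_n.+1 => F r)) => [|r _]; last by rewrite /F inord_val.
rewrite -(big_mkord xpredT F) {}/F.
case: ifP => pj.
  rewrite (@big_nat_window _ _ j 3); first last.
  - move=> r rn rj; rewrite local_mxE; [|lia|lia].
    by rewrite (negbTE rj) !andbF; case: eqP => [pr|_]; [lia|rewrite mul0r].
  - lia.
  rewrite big_ltn; last lia.
  rewrite big_ltn; last lia.
  rewrite big_ltn; last lia.
  rewrite big_geq ?addr0 ?addrA; last lia.
  rewrite !local_mxE; [|lia ..].
  rewrite !ifT; [|lia ..].
  by rewrite subnn subSnn (_ : j.+2 - j = 2)%N //; lia.
rewrite (@big_nat_window _ _ p 1); first last.
- move=> r rn rp; rewrite local_mxE ?ifF; [|lia ..].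
  by case: eqP => [pr|_]; [lia|rewrite mul0r].
- lia.
by rewrite addn1 big_nat1 local_mxE ?ifF ?eqxx ?mul1r; [|lia ..].
Qed.

End LocalMatrix.

Definition entry3 (R : Type) (a b c d e f g h k : R) (i j : nat) : R :=
  match i, j with
  | 0, 0 => a | 0, 1 => b | 0, _ => c
  | 1, 0 => d | 1, 1 => e | 1, _ => f
  | _, 0 => g | _, 1 => h | _, _ => k
  end.

Definition mx3 (R : Type) (a b c d e f g h k : R) : 'M[R]_3 :=
  \matrix_(i, j) entry3 a b c d e f g h k i j.

Lemma mx3E (R : Type) (a b c d e f g h k : R) i j : (i < 3)%N -> (j < 3)%N ->
  mx3 a b c d e f g h k (inord i) (inord j) = entry3 a b c d e f g h k i j.
Proof. by move=> i3 j3; rewrite mxE !inordK. Qed.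

Lemma mx3_surj (R : Type) (Y : 'M[R]_3) :
  exists a b c d e f g h k, Y = mx3 a b c d e f g h k.
Proof.
pose y i j := Y (inord i) (inord j).
exists (y 0 0), (y 0 1), (y 0 2), (y 1 0), (y 1 1), (y 1 2), (y 2 0), (y 2 1), (y 2 2).
apply/matrixP => i j; rewrite mxE -[i in LHS]inord_val -[j in LHS]inord_val.
by case: i => [[|[|[|i]]] hi] //; case: j => [[|[|[|j]]] hj].
Qed.

Definition gen_index (g : wgen) : nat := match g with S j | Rho j => j end.

(* Written with Peano's [Nat] operations so that [cbn] evaluates it on
   numerals: this computes entries of the image of a word symbolically. *)
Fixpoint word_entry (mf nf : nat -> nat -> CC) (w : seq wgen) (p q : nat) : CC :=
  match w with
  | [::] => if Nat.eqb p q then 1 else 0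
  | g :: w' =>
    let j := gen_index g in
    let xf := if g is S _ then mf else nf in
    if Nat.leb j p && Nat.ltb p (Nat.add j 3%N) then
        xf (Nat.sub p j) 0%N * word_entry mf nf w' j q
      + xf (Nat.sub p j) 1%N * word_entry mf nf w' j.+1 q
      + xf (Nat.sub p j) 2%N * word_entry mf nf w' j.+2 q
    else word_entry mf nf w' p q
  end.

Lemma word_mxE n (M N : 'M[CC]_3) mf nf w p q :
  (forall i j, (i < 3)%N -> (j < 3)%N -> M (inord i) (inord j) = mf i j) ->
  (forall i j, (i < 3)%N -> (j < 3)%N -> N (inord i) (inord j) = nf i j) ->
  all (wgen_valid n) w -> (p <= n)%N -> (q <= n)%N ->
  word_mx n M N w (inord p) (inord q) = word_entry mf nf w p q.
Proof.
move=> Mf Nf; elim: w p => [|g w IHw] p /=.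
  move=> _ pn qn; rewrite mxE inord_eq //.
  by rewrite (sameP (PeanoNat.Nat.eqb_spec p q) eqP); case: (p == q).
move=> /andP[gn wn] pn qn.
have jn : (gen_index g + 2 <= n)%N by case: g gn => j /=; lia.
have leb_leq x y : Nat.leb x y = (x <= y)%N by exact: sameP (PeanoNat.Nat.leb_spec0 x y) ssrnat.leP.
rewrite /Nat.ltb !leb_leq.
have -> : gen_mx n M N g = local_mx n (gen_index g) (if g is S _ then M else N) by case: g {gn jn}.
rewrite mul_local_mxE //; case: ifP => [pg|_]; last exact: IHw.
have pj : (p - gen_index g < 3)%N by lia.
rewrite !IHw //; [|lia ..].
by case: g {gn jn pg} pj => j /= pj; rewrite !(Mf, Nf).
Qed.

Lemma word_mx3E n (a b c d e f g h k A B C D E F G H K : CC) w p q :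
  all (wgen_valid n) w -> (p <= n)%N -> (q <= n)%N ->
  word_mx n (mx3 a b c d e f g h k) (mx3 A B C D E F G H K) w (inord p) (inord q)
  = word_entry (entry3 a b c d e f g h k) (entry3 A B C D E F G H K) w p q.
Proof. by apply: word_mxE => i j i3 j3; rewrite mx3E. Qed.

Definition s_count (w : seq wgen) : nat := count (fun g => if g is S _ then true else false) w.

Lemma wt_eq_odd_s_count n w1 w2 : wt_eq n w1 w2 -> odd (s_count w1) = odd (s_count w2).
Proof.
elim=> // [w1' w2' w3' _ -> _ -> //|u v l r _ _ lr].
by rewrite /s_count !count_cat !oddD; case: lr.
Qed.

Lemma wt_rel_eq n l r : wt_rel n l r -> wt_eq n l r.
Proof. by move=> lr; have := @wt_eq_rel n [::] [::] _ _ isT isT lr; rewrite /= !cats0. Qed.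

Definition represents n (M N : 'M[CC]_3) : Prop :=
  forall w1 w2, all (wgen_valid n) w1 -> all (wgen_valid n) w2 ->
    wt_eq n w1 w2 -> word_mx n M N w1 = word_mx n M N w2.

Definition unfaithful n (M N : 'M[CC]_3) : Prop :=
  exists w, [/\ all (wgen_valid n) w, ~ wt_eq n w [::] & word_mx n M N w = 1%:M].

Lemma unfaithful_odd_word n M N w :
  all (wgen_valid n) w -> odd (s_count w) -> word_mx n M N w = 1%:M -> unfaithful n M N.
Proof. by move=> wn odd_w w1; exists w; split=> // /wt_eq_odd_s_count; rewrite odd_w. Qed.

Lemma unfaithful_eq n M : (2 <= n)%N -> represents n M M -> unfaithful n M M.
Proof.
case: n => [|[|n]] // _ rep; apply: (@unfaithful_odd_word _ _ _ [:: S 0; Rho 0]) => //.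
exact: rep [:: S 0; S 0] [::] isT isT (wt_rel_eq (@rel_ss n.+2 0 isT)).
Qed.

Definition scaled_swap01 (f h : CC) : 'M[CC]_3 := mx3 0 f 0 h 0 0 0 0 1.
Definition scaled_swap12 (f h : CC) : 'M[CC]_3 := mx3 1 0 0 0 0 f 0 h 0.

Definition scaled_swap_pair (X : CC -> CC -> 'M[CC]_3) (M N : 'M[CC]_3) : Prop :=
  exists f h F H, [/\ f * h = 1, F * H = 1, M = X f h & N = X F H].

(* The image of s_1 rho_2 is a monomial matrix on a 3-cycle of coordinates,
   with weights multiplying to f h F H = 1; so its cube is the identity. *)
Lemma unfaithful_scaled_swap_pair n X M N :
  X = scaled_swap01 \/ X = scaled_swap12 -> (3 <= n)%N ->
  scaled_swap_pair X M N -> unfaithful n M N.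
Proof.
move=> X_swap; case: n => [|[|[|n]]] // _ [f [h [F [H [fh FH -> ->]]]]].
apply: (@unfaithful_odd_word _ _ _ [:: S 0; Rho 1; S 0; Rho 1; S 0; Rho 1]) => //.
have f0 := neq0_mul_eq1 fh; have F0 := neq0_mul_eq1 FH.
move: fh FH => /mulr1_eq <- /mulr1_eq <-.
rewrite -[1%:M]/(word_mx n.+3 (X f f^-1) (X F F^-1) [::]).
apply: eq_mx_inord => p q pn qn.
case: X_swap => ->; rewrite /scaled_swap01 /scaled_swap12 !word_mx3E //;
  do 4 (try destruct p as [|p]); do 4 (try destruct q as [|q]);
  cbn [word_entry entry3 gen_index Nat.leb Nat.ltb Nat.sub Nat.add Nat.eqb andb];
  by field; rewrite ?f0 ?F0.
Qed.

Ltac ring_from eq :=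
  apply/subr0_eq;
  first [ apply: (eq0_of_eq_sub eq); ring | apply: (eq0_of_eq_sub (esym eq)); ring ].

(* [entry_eq ent rel p q] closes a goal [u = v] when [u - v] is, up to sign,
   the difference of the two sides of the (p, q) entry of the relation [rel]. *)
Ltac entry_eq ent rel p q :=
  let eq := fresh "eq" in
  have eq := ent _ _ rel isT isT p q isT isT;
  cbn [word_entry entry3 gen_index Nat.leb Nat.ltb Nat.sub Nat.add Nat.eqb andb] in eq;
  ring_from eq.

Section Classification.

Variables (m : nat) (a b c d e f g h k A B C D E F G H K : CC).
Local Notation M := (mx3 a b c d e f g h k).
Local Notation N := (mx3 A B C D E F G H K).
Hypothesis rep : represents m.+4 M N.

Lemma rel_entry l r : wt_rel m.+4 l r ->
  all (wgen_valid m.+4) l -> all (wgen_valid m.+4) r ->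
  forall p q, (p <= m.+4)%N -> (q <= m.+4)%N ->
  word_entry (entry3 a b c d e f g h k) (entry3 A B C D E F G H K) l p q
  = word_entry (entry3 a b c d e f g h k) (entry3 A B C D E F G H K) r p q.
Proof.
move=> lr l_ok r_ok p q pn qn.
by rewrite -!(@word_mx3E m.+4) // (rep l_ok r_ok (wt_rel_eq lr)).
Qed.

(* Named after their generators in the paper's 1-based indexing. *)
Let s1s1 := @rel_ss m.+4 0 isT.
Let r1r1 := @rel_rr m.+4 0 isT.
Let s1s3 := @rel_s_comm m.+4 0 2 isT isT isT.
Let r1r3 := @rel_rho_comm m.+4 0 2 isT isT isT.
Let s1r3 := @rel_mixed_comm m.+4 0 2 isT isT isT.
Let s3r1 := @rel_mixed_comm m.+4 2 0 isT isT isT.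
Let mixed1 := @rel_mixed m.+4 0 isT.
Let welded1 := @rel_welded m.+4 0 isT.
Let braid1 := @rel_rho_braid m.+4 0 isT.

Lemma corner_entries0 : [/\ c = 0, g = 0, C = 0 & G = 0].
Proof.
have ent := rel_entry.
by split; apply: eq0_of_sqr;
  [entry_eq ent s1s3 0%N 4%N | entry_eq ent s1s3 4%N 0%N
  | entry_eq ent r1r3 0%N 4%N | entry_eq ent r1r3 4%N 0%N].
Qed.

Section Corners.
Hypotheses (c0 : c = 0) (g0 : g = 0) (C0 : C = 0) (G0 : G = 0).

Section NonzeroF.
Hypothesis f_neq0 : f != 0.

Lemma f_neq0_normal : [/\ a = 1, A = 1, b = 0, B = 0 & e = - k].
Proof.
have ent := rel_entry; subst.
have a1 : a = 1 by apply: (mulfI f_neq0); entry_eq ent s1s3 1%N 2%N.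
have A1 : A = 1 by apply: (mulfI f_neq0); entry_eq ent s1r3 1%N 2%N.
have b0 : b = 0 by apply: (mulfI f_neq0); entry_eq ent s1s3 1%N 3%N.
have B0 : B = 0 by apply: (mulfI f_neq0); entry_eq ent s1r3 1%N 3%N.
subst; split=> //.
by apply: (mulfI f_neq0); entry_eq ent s1s1 1%N 2%N.
Qed.

Hypotheses (a1 : a = 1) (A1 : A = 1) (b0 : b = 0) (B0 : B = 0) (ek : e = - k).

Lemma f_neq0_k1 : k = 1 -> N = M.
Proof.
have ent := rel_entry; move=> k1; subst.
have h0 : h = 0 by apply: (mulfI f_neq0); entry_eq ent s1s1 2%N 2%N.
subst h.
have H0 : H = 0 by entry_eq ent welded1 3%N 2%N.
have K1 : K = 1 by entry_eq ent welded1 3%N 3%N.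
subst H K.
have fF : f = F * (2 - d * F) by entry_eq ent mixed1 2%N 3%N.
have F_neq0 : F != 0 by apply: contra_neq f_neq0 => F0; rewrite fF F0 mul0r.
have Em1 : E = -1 by apply: (mulfI F_neq0); entry_eq ent r1r1 1%N 2%N.
subst E.
have DF : D * F = 1 by apply: (mulfI (two_neq0 CC)); entry_eq ent mixed1 1%N 1%N.
have df : d * f = 1 by apply: (mulfI F_neq0); entry_eq ent welded1 1%N 2%N.
have dF : d * F = 1.
  by apply/subr0_eq/eq0_of_sqr; rewrite fF in df; ring_from df.
have dD : d = D by apply: (mulIf F_neq0); rewrite dF DF.
by subst d; rewrite fF dF; congr mx3; ring.
Qed.

Lemma f_neq0_k_neq1_normal : k != 1 -> d = 0 /\ D = 0.
Proof.
have ent := rel_entry; move=> k_neq1; subst.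
have k1_neq0 : k - 1 != 0 by rewrite subr_eq0.
by split; apply: (mulIf k1_neq0); [entry_eq ent s1s3 3%N 2%N | entry_eq ent s1r3 3%N 2%N].
Qed.

Lemma f_neq0_k0 : k = 0 -> scaled_swap_pair scaled_swap12 M N.
Proof.
move=> k0; have [d0 D0] : d = 0 /\ D = 0.
  by apply: f_neq0_k_neq1_normal; rewrite k0 eq_sym oner_eq0.
have ent := rel_entry; subst.
have fh : f * h = 1 by entry_eq ent s1s1 2%N 2%N.
have h_neq0 : h != 0 by apply: (@neq0_mul_eq1 _ _ f); rewrite mulrC.
have mx12 : E * (f - F) = 0 by entry_eq ent mixed1 1%N 2%N.
have mx21 : h * (E * K) = 0 by entry_eq ent mixed1 2%N 1%N.
have nn12 : F * (K + E) = 0 by entry_eq ent r1r1 1%N 2%N.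
have E0 : E = 0.
  case: (eqVneq E 0) => // E_neq0; exfalso.
  have fF : f = F by apply/subr0_eq/(mulfI E_neq0); rewrite mx12 mulr0.
  have K0 : K = 0 by apply/(mulfI E_neq0)/(mulfI h_neq0); rewrite mx21 !mulr0.
  move/eqP: nn12; rewrite K0 add0r -fF mulf_eq0.
  by rewrite (negbTE f_neq0) (negbTE E_neq0).
subst E.
have FH : F * H = 1 by entry_eq ent r1r1 1%N 1%N.
have K0 : K = 0.
  have : K * K + F * H = 1 by entry_eq ent r1r1 2%N 2%N.
  by rewrite FH -{2}[1]add0r => /addIr /eq0_of_sqr.
by subst; exists f, h, F, H; rewrite /scaled_swap12 oppr0.
Qed.

Lemma f_neq0_k_neq01 : k != 0 -> k != 1 -> False.
Proof.
move=> k_neq0 k_neq1; have [d0 D0] := f_neq0_k_neq1_normal k_neq1.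
have ent := rel_entry; subst.
have F0 : F = 0.
  by apply: (mulfI (mulf_neq0 k_neq0 k_neq0)); entry_eq ent welded1 2%N 3%N.
subst F.
have k1_neq0 : 1 - k != 0 by rewrite subr_eq0 eq_sym.
have K0 : K = 0 by apply: (mulIf k1_neq0); entry_eq ent mixed1 3%N 3%N.
subst K.
have : (1 : CC) = 0 by entry_eq ent r1r1 2%N 2%N.
by move/eqP; rewrite oner_eq0.
Qed.

End NonzeroF.

Lemma f_neq0_classified : f != 0 -> N = M \/ scaled_swap_pair scaled_swap12 M N.
Proof.
move=> f_neq0; have [a1 A1 b0 B0 ek] := f_neq0_normal f_neq0.
case: (eqVneq k 1) => [k1|k_neq1]; first by left; exact: f_neq0_k1.
case: (eqVneq k 0) => [k0|k_neq0]; first by right; exact: f_neq0_k0.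
by exfalso; apply: f_neq0_k_neq01.
Qed.

Lemma f0_F_neq0_false : f = 0 -> F != 0 -> False.
Proof.
have ent := rel_entry; move=> f0 F_neq0; subst.
have a1 : a = 1 by apply: (mulfI F_neq0); entry_eq ent s3r1 1%N 2%N.
have b0 : b = 0 by apply: (mulfI F_neq0); entry_eq ent s3r1 1%N 3%N.
subst.
have ek : e * k = 0 by apply: (mulIf F_neq0); entry_eq ent welded1 2%N 3%N.
have kk : k * k = 1 by entry_eq ent s1s1 2%N 2%N.
have ee : e * e = 1 by entry_eq ent s1s1 1%N 1%N.
move/eqP: ek; rewrite mulf_eq0 (negbTE (neq0_mul_eq1 kk)) orbF.
by rewrite (negbTE (neq0_mul_eq1 ee)).
Qed.

Section ZeroF.
Hypotheses (f0 : f = 0) (F0 : F = 0).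

Lemma f0_F0_k1_K1 : k = 1 /\ K = 1.
Proof.
have ent := rel_entry; subst.
have KK : K * K = 1 by entry_eq ent r1r1 2%N 2%N.
have k1 : k = 1.
  by apply: (mulfI (neq0_mul_eq1 KK)); entry_eq ent mixed1 3%N 3%N.
subst k; split=> //; apply/esym; entry_eq ent welded1 3%N 3%N.
Qed.

Lemma h_or_H_neq0_normal : (h != 0) || (H != 0) -> [/\ a = 1, A = 1, d = 0 & D = 0].
Proof.
have ent := rel_entry; subst.
case/orP=> hH_neq0; split; apply: (mulfI hH_neq0).
- by entry_eq ent s1s3 2%N 1%N.
- by entry_eq ent s1r3 2%N 1%N.
- by entry_eq ent s1s3 3%N 1%N.
- by entry_eq ent s1r3 3%N 1%N.
- by entry_eq ent s3r1 2%N 1%N.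
- by entry_eq ent r1r3 2%N 1%N.
- by entry_eq ent s3r1 3%N 1%N.
- by entry_eq ent r1r3 3%N 1%N.
Qed.

Section UnitBottom.
Hypotheses (k1 : k = 1) (K1 : K = 1).

Lemma h0_H0_A0 : h = 0 -> H = 0 -> A = 0 -> scaled_swap_pair scaled_swap01 M N.
Proof.
have ent := rel_entry; move=> h0 H0 A0; subst.
have BD : B * D = 1 by entry_eq ent r1r1 0%N 0%N.
have E0 : E = 0.
  have : E * E + B * D = 1 by entry_eq ent r1r1 1%N 1%N.
  by rewrite BD -{2}[1]add0r => /addIr /eq0_of_sqr.
subst E.
have ae : a * e = 0 by apply: (mulIf (neq0_mul_eq1 BD)); entry_eq ent welded1 0%N 1%N.
have wd00 : a * (d * B - 1) = 0 by entry_eq ent welded1 0%N 0%N.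
have wd22 : e * (1 - d * B) = 0 by entry_eq ent welded1 2%N 2%N.
have mm10 : d * (e + a) = 0 by entry_eq ent s1s1 1%N 0%N.
have a0 : a = 0.
  case: (eqVneq a 0) => // a_neq0; exfalso.
  have e0 : e = 0 by apply: (mulfI a_neq0); rewrite ae mulr0.
  have d0 : d = 0 by apply: (mulIf a_neq0); rewrite mul0r -mm10 e0 add0r.
  by move/eqP: wd00; rewrite d0 mul0r sub0r mulrN1 oppr_eq0 (negbTE a_neq0).
subst a.
have e0 : e = 0.
  case: (eqVneq e 0) => // e_neq0; exfalso.
  have d0 : d = 0 by apply: (mulIf e_neq0); rewrite mul0r -mm10 addr0.
  by move/eqP: wd22; rewrite d0 mul0r subr0 mulr1 (negbTE e_neq0).
subst e.
have bd : b * d = 1 by entry_eq ent s1s1 0%N 0%N.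
by exists b, d, B, D.
Qed.

Lemma h0_H0_A_neq0 : h = 0 -> H = 0 -> A != 0 -> N = M.
Proof.
have ent := rel_entry; move=> h0 H0 A_neq0; subst.
have br00 : A + B * D = 1 by apply: (mulfI A_neq0); entry_eq ent braid1 0%N 0%N.
have nn00 : B * D + A * A = 1 by entry_eq ent r1r1 0%N 0%N.
have A1 : A = 1 by apply: (mulfI A_neq0); ring_from (etrans nn00 (esym br00)).
subst A.
have BD : B * D = 0 by ring_from br00.
have EE : E * E = 1.
  have : E * E + B * D = 1 by entry_eq ent r1r1 1%N 1%N.
  by rewrite BD addr0.
have E_neq0 := neq0_mul_eq1 EE.
have B0 : B = 0 by apply: (mulfI E_neq0); entry_eq ent braid1 0%N 1%N.
have D0 : D = 0 by apply: (mulfI E_neq0); entry_eq ent braid1 1%N 0%N.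
subst B D.
have a1 : a = 1 by entry_eq ent mixed1 0%N 0%N.
subst a.
have d0 : d = 0 by apply: (mulfI E_neq0); entry_eq ent mixed1 1%N 0%N.
have b0 : b = 0 by entry_eq ent mixed1 0%N 1%N.
subst d b.
have ee : e * e = 1 by entry_eq ent s1s1 1%N 1%N.
have E1 : E = 1 by apply: (mulfI (neq0_mul_eq1 ee)); entry_eq ent welded1 1%N 1%N.
subst E.
have e1 : e = 1 by entry_eq ent mixed1 1%N 1%N.
by subst e.
Qed.

Section UnitCorner.
Hypotheses (a1 : a = 1) (A1 : A = 1) (d0 : d = 0) (D0 : D = 0).

Lemma unit_corner_e1 : e = 1 -> N = M.
Proof.
have ent := rel_entry; move=> e1; subst.
have h0 : h = 0 by apply: (mulfI (two_neq0 CC)); entry_eq ent s1s1 2%N 1%N.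
have b0 : b = 0 by apply: (mulfI (two_neq0 CC)); entry_eq ent s1s1 0%N 1%N.
subst h b.
have E1 : E = 1 by entry_eq ent welded1 1%N 1%N.
subst E.
have H0 : H = 0 by apply: (mulfI (two_neq0 CC)); entry_eq ent r1r1 2%N 1%N.
have B0 : B = 0 by apply: (mulfI (two_neq0 CC)); entry_eq ent r1r1 0%N 1%N.
by subst.
Qed.

Lemma unit_corner_em1 : e = -1 -> N = M.
Proof.
have ent := rel_entry; move=> em1; subst.
have EE : E * E = 1 by entry_eq ent r1r1 1%N 1%N.
have mx22 : E + B * H = 0 by apply: (mulfI (two_neq0 CC)); entry_eq ent mixed1 2%N 2%N.
have Em1 : E = -1.
  move/eqP: EE; rewrite -expr2 sqrf_eq1 => /orP[/eqP E1|/eqP //]; exfalso.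
  have B0 : B = 0 by apply: (mulfI (two_neq0 CC)); subst E; entry_eq ent r1r1 0%N 1%N.
  by move/eqP: mx22; rewrite E1 B0 mul0r addr0 oner_eq0.
subst E.
have BH : B * H = 1 by ring_from mx22.
have bh : b * h = 1 by apply: (mulfI (two_neq0 CC)); entry_eq ent welded1 1%N 1%N.
have bB : b = B * (2 - h * B) by entry_eq ent mixed1 0%N 1%N.
have hB : h * B = 1.
  by apply/subr0_eq/eq0_of_sqr; rewrite bB in bh; ring_from bh.
have Hh : H = h by apply: (mulfI (neq0_mul_eq1 BH)); rewrite BH mulrC hB.
by subst H; rewrite bB hB; congr mx3; ring.
Qed.

Lemma unit_corner_eq : N = M.
Proof.
have ee : e * e = 1 by have ent := rel_entry; subst; entry_eq ent s1s1 1%N 1%N.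
move/eqP: ee; rewrite -expr2 sqrf_eq1 => /orP[] /eqP.
  exact: unit_corner_e1.
exact: unit_corner_em1.
Qed.

End UnitCorner.
End UnitBottom.

Lemma f0_F0_classified : N = M \/ scaled_swap_pair scaled_swap01 M N.
Proof.
have [k1 K1] := f0_F0_k1_K1.
case: (boolP ((h != 0) || (H != 0))) => [hH|]; last first.
  rewrite negb_or !negbK => /andP[/eqP h0 /eqP H0].
  case: (eqVneq A 0) => [A0|A_neq0]; first by right; apply: h0_H0_A0.
  by left; apply: h0_H0_A_neq0.
have [a1 A1 d0 D0] := h_or_H_neq0_normal hH.
by left; apply: unit_corner_eq.
Qed.

End ZeroF.

Lemma corners0_classified :
  [\/ N = M, scaled_swap_pair scaled_swap01 M N | scaled_swap_pair scaled_swap12 M N].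
Proof.
case: (eqVneq f 0) => [f0|f_neq0]; last first.
  by case: (f_neq0_classified f_neq0) => [|swap]; [apply: Or31 | apply: Or33].
case: (eqVneq F 0) => [F0|F_neq0]; last by case: (f0_F_neq0_false f0 F_neq0).
by case: (f0_F0_classified f0 F0) => [|swap]; [apply: Or31 | apply: Or32].
Qed.

End Corners.

Lemma homogeneous_local_classification :
  [\/ N = M, scaled_swap_pair scaled_swap01 M N | scaled_swap_pair scaled_swap12 M N].
Proof. by have [c0 g0 C0 G0] := corner_entries0; apply: corners0_classified. Qed.

End Classification.

Theorem theorem4p6 (n : nat) (M N : 'M[CC]_3) :
  (4 <= n)%N ->
  M \in unitmx -> N \in unitmx ->
  (forall w1 w2 : seq wgen, all (wgen_valid n) w1 -> all (wgen_valid n) w2 ->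
     wt_eq n w1 w2 -> word_mx n M N w1 = word_mx n M N w2) ->
  exists w : seq wgen,
    [/\ all (wgen_valid n) w, ~ wt_eq n w [::] & word_mx n M N w = 1%:M].
Proof.
move=> n4 _ _ rep; have [m n_eq] : exists m, n = m.+4 by exists (n - 4)%N; lia.
have [a [b [c [d [e [f [g [h [k M_eq]]]]]]]]] := mx3_surj M.
have [A [B [C [D [E [F [G [H [K N_eq]]]]]]]]] := mx3_surj N.
subst n M N.
case: (homogeneous_local_classification rep) => [NM|swap|swap].
- by rewrite NM in rep *; apply: unfaithful_eq.
- exact: unfaithful_scaled_swap_pair (or_introl erefl) _ swap.
- exact: unfaithful_scaled_swap_pair (or_intror erefl) _ swap.
Qed.
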